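(* Let $S$ be a numerical semigroup with minimal generators $a_1<a_2<\cdots<a_\nu$ ($\nu\ge2$), multiplicity $\mu=a_1$ and conductor $c$, and suppose $a_2>\frac{c+\mu}{3}$. Let $P=\{a_1,\dots,a_\nu\}$, $q_1=|\{a\in P\setminus\{\mu\}: \tfrac13(c+\mu)<a<\tfrac12(c+\mu)\}|$, $q_2=|\{a\in P\setminus\{\mu\}: \tfrac12(c+\mu)\le a<\tfrac23(c+\mu)\}|$, and $L(S)=\{x\in S: 0\le x<c\}$. Then $$|L(S)|\ge\left\lfloor\frac{c}{\mu}\right\rfloor+\left(\left\lfloor\frac12\frac{c}{\mu}-\frac12\right\rfloor+1\right)q_1+\left(\left\lfloor\frac13\frac{c}{\mu}-\frac23\right\rfloor+1\right)q_2.$$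
   Context: A numerical semigroup is a submonoid $S\subseteq\mathbb{N}$ with finite complement. The minimal generating set has cardinality $\nu$ (embedding dimension); its smallest element $\mu$ is the multiplicity. The conductor $c$ is the least integer with $c+\mathbb{N}\subseteq S$. *)

From mathcomp Require Import all_boot all_order all_algebra.
Set Implicit Arguments. Unset Strict Implicit. Unset Printing Implicit Defensive.

Definition numerical_semigroup (S : pred nat) : Prop :=
  [/\ S 0, (forall x y, S x -> S y -> S (x + y))
    & exists N, forall n, N <= n -> S n].

Definition is_conductor (S : pred nat) (c : nat) : Prop :=
  (forall n, c <= n -> S n) /\
  (forall c', (forall n, c' <= n -> S n) -> c <= c').

Definition is_multiplicity (S : pred nat) (m : nat) : Prop :=
  [/\ S m, 0 < m & forall x, S x -> 0 < x -> m <= x].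

Definition min_gen (S : pred nat) (a : nat) : bool :=
  [&& S a, 0 < a & ~~ has (fun x => S x && S (a - x)) (iota 1 a.-1)].

From mathcomp Require Import all_boot all_order all_algebra.
From mathcomp Require Import ring lra zify.
Import Order.TTheory GRing.Theory Num.Theory.

(* For b = 0 and for every minimal generator b <> mu, the progression
   b, b + mu, b + 2 mu, ... lies in S.  These progressions are pairwise
   disjoint: if b < b' are congruent modulo mu, then b' = b + k mu is a sum of
   two nonzero elements of S unless b = 0 and b' = mu.  Counting their terms
   below c gives floor(c/mu) elements for b = 0, at least
   floor((c+mu)/(2mu)) for each generator below (c+mu)/2 and at least
   floor((c+mu)/(3mu)) for each generator below 2(c+mu)/3; these are the three
   coefficients of the bound. *)

Set Implicit Arguments.
Unset Strict Implicit.
Unset Printing Implicit Defensive.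

Definition progression (m a : nat) : pred nat := fun x => (a <= x) && (m %| x - a).

(* The hypothesis [a + n * m < c + m] says that the first n terms
   a, ..., a + (n - 1) m are below c. *)
Lemma count_progression_ge m a n c : 0 < m -> a + n * m < c + m ->
  n <= count (progression m a) (iota 0 c).
Proof.
move=> m_gt0; elim: n c => [//|n IHn] c fit.
have last_lt_c : a + n * m < c by move: fit; rewrite mulSn; lia.
rewrite -(subnKC (ltnW last_lt_c)) iotaD count_cat add0n.
have -> : c - (a + n * m) = (c - (a + n * m)).-1.+1 by lia.
rewrite /= {2}/progression leq_addr addKn dvdn_mull //=.
have := IHn (a + n * m); lia.
Qed.

Lemma progression_dvd_sub m a b x :
  a <= b -> progression m a x -> progression m b x -> m %| b - a.
Proof.
move=> le_ab /andP[le_ax dvd_a] /andP[le_bx dvd_b].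
have -> : b - a = (x - a) - (x - b) by lia.
exact: dvdn_sub.
Qed.

Lemma sum_count_disjoint_le (I T : eqType) (s : seq I) (P : I -> pred T)
    (Q : pred T) (t : seq T) :
  uniq s -> {in s &, forall i j x, P i x -> P j x -> i = j} ->
  {in s, forall i, subpred (P i) Q} ->
  \sum_(i <- s) count (P i) t <= count Q t.
Proof.
elim: s Q => [|i s IHs] Q; first by rewrite big_nil.
rewrite big_cons => /= /andP[i_notin_s s_uniq] P_disj PQ.
pose Q' := predI Q (predC (P i)).
have le_rest : \sum_(j <- s) count (P j) t <= count Q' t.
  apply: IHs => // [j k js ks x|j js x Pjx].
    by apply: P_disj; rewrite inE ?js ?ks ?orbT.
  rewrite /Q' /= (PQ j) ?inE ?js ?orbT //=; apply/negP => Pix.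
  have ji : j = i by apply: (P_disj j i _ _ x); rewrite ?inE ?js ?eqxx ?orbT.
  by rewrite -ji js in i_notin_s.
apply: leq_trans (leq_add (leqnn _) le_rest) _.
rewrite -count_predUI (@eq_count _ (predI _ _) pred0) => [|x /=]; last first.
  by rewrite andbCA andbN andbF.
rewrite count_pred0 addn0; apply: sub_count => x /= /orP[Pix|/andP[] //].
by apply: (PQ i); rewrite ?inE ?eqxx.
Qed.

Lemma leq_mul_size_sum (I : eqType) (r : seq I) (F : I -> nat) n :
  {in r, forall i, n <= F i} -> n * size r <= \sum_(i <- r) F i.
Proof.
move=> le_nF; rewrite -sum1_size big_distrr big_seq [leqRHS]big_seq /=.
by apply: leq_sum => i ri; rewrite muln1 le_nF.
Qed.

Lemma min_gen_indecomposable (S : pred nat) j w :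
  min_gen S j -> 0 < w < j -> S w -> S (j - w) -> False.
Proof.
case/and3P=> _ _ /hasPn no_split w_bounds Sw Sjw.
have : w \in iota 1 j.-1 by rewrite mem_iota; lia.
by move/no_split; rewrite Sw Sjw.
Qed.

Section Progressions.

Variables (S : pred nat) (mu : nat).
Hypotheses (S_ns : numerical_semigroup S) (S_mult : is_multiplicity S mu).

Lemma mem_muln k : S (k * mu).
Proof.
have [S0 SD _] := S_ns; have [Smu _ _] := S_mult.
by elim: k => [|k IHk]; rewrite ?mul0n // mulSn SD.
Qed.

Lemma min_gen_congr i j :
  S i -> i < j -> mu %| j - i -> min_gen S j -> i = 0 /\ j = mu.
Proof.
move=> Si lt_ij /dvdnP[k def_k] gen_j; have [Smu mu_gt0 _] := S_mult.
have [i0 | i_gt0] := posnP i; last first.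
  exfalso; apply: (min_gen_indecomposable (w := i) gen_j); rewrite ?def_k ?mem_muln //.
  by rewrite i_gt0 lt_ij.
split=> //; subst i; rewrite subn0 in def_k; subst j.
have [k_le1 | k_gt1] := leqP k 1.
  by case: k k_le1 lt_ij gen_j => [|[|]] //; rewrite mul1n.
exfalso; apply: (min_gen_indecomposable (w := mu) gen_j) => //.
  by rewrite mu_gt0 -{1}[mu]mul1n ltn_pmul2r.
by rewrite -{2}[mu]mul1n -mulnBl mem_muln.
Qed.

Definition progression_base (b : nat) : bool := (b == 0) || min_gen S b && (b != mu).

Lemma progression_base_mem b : progression_base b -> S b.
Proof.
have [S0 _ _] := S_ns.
by case/orP=> [/eqP -> // | /andP[/and3P[]]].
Qed.

Lemma progression_mem b x : progression_base b -> progression mu b x -> S x.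
Proof.
have [_ SD _] := S_ns.
move=> base_b /andP[le_bx /dvdnP[k def_k]].
by rewrite -(subnKC le_bx) def_k SD ?mem_muln ?progression_base_mem.
Qed.

Lemma progression_base_disjoint a b x : progression_base a -> progression_base b ->
  progression mu a x -> progression mu b x -> a = b.
Proof.
wlog le_ab : a b / a <= b => [hwlog|].
  by have [/hwlog // | /ltnW/hwlog hba ? ? ? ?] := leqP a b; symmetry; apply: hba.
move=> base_a base_b a_x b_x.
have [// | neq_ab] := eqVneq a b.
have lt_ab : a < b by rewrite ltn_neqAle neq_ab le_ab.
have /andP[gen_b b_neq_mu] : min_gen S b && (b != mu).
  by case/orP: base_b => // /eqP b0; move: lt_ab; rewrite b0.
have [_ b_eq_mu] := min_gen_congr (progression_base_mem base_a) lt_ab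
  (progression_dvd_sub le_ab a_x b_x) gen_b.
by rewrite b_eq_mu eqxx in b_neq_mu.
Qed.

Lemma sum_count_progression_le (B : seq nat) c : uniq B -> all progression_base B ->
  \sum_(b <- B) count (progression mu b) (iota 0 c) <= count S (iota 0 c).
Proof.
move=> B_uniq /allP base_B; apply: sum_count_disjoint_le => // [a b aB bB x|b bB x].
  by apply: progression_base_disjoint; apply: base_B.
by apply: progression_mem; apply: base_B.
Qed.

Lemma count_small_elements_ge (G1 G2 : seq nat) c n0 n1 n2 :
  uniq (G1 ++ G2) -> {in G1 ++ G2, forall a, min_gen S a && (a != mu)} ->
  n0 * mu <= c ->
  {in G1, forall a, a + n1 * mu < c + mu} -> {in G2, forall a, a + n2 * mu < c + mu} ->
  n0 + n1 * size G1 + n2 * size G2 <= count S (iota 0 c).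
Proof.
move=> G_uniq G_gen fit0 fit1 fit2; have [_ mu_gt0 _] := S_mult.
have G_base : all progression_base (G1 ++ G2).
  by apply/allP => a /G_gen gen_a; rewrite /progression_base gen_a orbT.
have notin0 : 0 \notin G1 ++ G2 by apply/negP => /G_gen/andP[/and3P[]].
apply: leq_trans (sum_count_progression_le (B := 0 :: G1 ++ G2) c _ _); last first.
- by rewrite /= G_base.
- by rewrite /= notin0.
rewrite big_cons big_cat -addnA leq_add ?leq_add //.
- by apply: count_progression_ge; rewrite // add0n; lia.
- by apply: leq_mul_size_sum => a /fit1; apply: count_progression_ge.
- by apply: leq_mul_size_sum => a /fit2; apply: count_progression_ge.
Qed.

End Progressions.

Local Open Scope ring_scope.

Lemma floor_truncnE (R : archiRealDomainType) (x : R) :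
  0 <= x -> Num.floor x = (Num.truncn x)%:Z.
Proof. by move=> x_ge0; rewrite truncn_floor x_ge0 gez0_abs // floor_ge0. Qed.

Lemma floorD1_truncnE (R : archiRealDomainType) (x : R) :
  -1 <= x -> Num.floor x + 1 = (Num.truncn (x + 1))%:Z.
Proof. by move=> x_ge_N1; rewrite -floor_truncnE -?lerBlDr ?sub0r // floorDrz ?floor1. Qed.

Lemma truncn_divr_mulr_le (R : archiRealFieldType) (x m : R) :
  0 < m -> 0 <= x -> (Num.truncn (x / m))%:R * m <= x.
Proof. by move=> m_gt0 x_ge0; rewrite -ler_pdivlMr // truncn_le divr_ge0 // ltW. Qed.

Lemma ltn_add_truncn_mul (a m s : nat) (r : rat) :
  0 < m%:Q -> 0 <= r -> a%:Q < s%:Q - r -> (a + Num.truncn (r / m%:Q) * m < s)%N.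
Proof.
move=> m_gt0 r_ge0 lt_a; rewrite -(ltr_nat rat) natrD natrM.
have le_r := truncn_divr_mulr_le m_gt0 r_ge0.
have lt_aR : a%:R < s%:R - r := lt_a.
lra.
Qed.

Theorem proposition3p2 (S : pred nat) (c mu : nat) :
  numerical_semigroup S ->
  is_conductor S c ->
  is_multiplicity S mu ->
  (* embedding dimension nu >= 2 *)
  (exists a, min_gen S a /\ a <> mu) ->
  (* a_2 > (c + mu)/3, i.e. every minimal generator other than mu exceeds (c+mu)/3 *)
  (forall a, min_gen S a -> a <> mu -> ((c + mu)%:Q / 3%:Q < a%:Q)%R) ->
  let q1 := count (fun a => [&& min_gen S a, a != mu,
                   ((c + mu)%:Q / 3%:Q < a%:Q)%R & (a%:Q < (c + mu)%:Q / 2%:Q)%R])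
                  (iota 0 (c + mu)) in
  let q2 := count (fun a => [&& min_gen S a, a != mu,
                   ((c + mu)%:Q / 2%:Q <= a%:Q)%R & (a%:Q < 2%:Q * (c + mu)%:Q / 3%:Q)%R])
                  (iota 0 (c + mu)) in
  let L := count (fun x => S x) (iota 0 c) in
  (Num.floor (c%:Q / mu%:Q)
   + (Num.floor (2%:Q^-1 * (c%:Q / mu%:Q) - 2%:Q^-1) + 1) * q1%:Z
   + (Num.floor (3%:Q^-1 * (c%:Q / mu%:Q) - 2%:Q / 3%:Q) + 1) * q2%:Z
   <= L%:Z)%R.
Proof.
move=> S_ns _ S_mult _ _ /=; set P1 := fun a => _; set P2 := fun a => _.
have [_ mu_gt0 _] := S_mult; have mu_gt0Q : 0 < mu%:Q by rewrite ltr0n.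
pose n0 := Num.truncn (c%:Q / mu%:Q).
pose n1 := Num.truncn ((c + mu)%:Q / 2 / mu%:Q).
pose n2 := Num.truncn ((c + mu)%:Q / 3 / mu%:Q).
have c_div_mu_ge0 : 0 <= c%:Q / mu%:Q by rewrite divr_ge0 // ltW.
have cmu_ge0 : 0 <= (c + mu)%:Q by rewrite ler0z.
have -> : Num.floor (c%:Q / mu%:Q) = n0 by rewrite floor_truncnE.
have -> : Num.floor (2%:Q^-1 * (c%:Q / mu%:Q) - 2%:Q^-1) + 1 = n1.
  rewrite floorD1_truncnE; last by lra.
  by rewrite /n1; congr (Posz (Num.truncn _)); rewrite PoszD intrD; field; rewrite lt0r_neq0.
have -> : Num.floor (3%:Q^-1 * (c%:Q / mu%:Q) - 2%:Q / 3%:Q) + 1 = n2.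
  rewrite floorD1_truncnE; last by lra.
  by rewrite /n2; congr (Posz (Num.truncn _)); rewrite PoszD intrD; field; rewrite lt0r_neq0.
rewrite -(size_filter P1) -(size_filter P2) -!PoszM -!PoszD lez_nat.
apply: (count_small_elements_ge S_ns S_mult).
- rewrite cat_uniq !filter_uniq ?iota_uniq //= andbT; apply/hasPn => a.
  rewrite !mem_filter => /andP[/and4P[_ _ le_a _] _].
  by apply/negP => /andP[/and4P[_ _ _ lt_a] _]; lra.
- by move=> a; rewrite mem_cat !mem_filter => /orP[] /andP[/and4P[-> -> _ _] _].
- by rewrite -(ler_nat rat) natrM truncn_divr_mulr_le.
- move=> a; rewrite mem_filter => /andP[/and4P[_ _ _ lt_a] _].
  by apply: ltn_add_truncn_mul; rewrite ?PoszD; lra.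
- move=> a; rewrite mem_filter => /andP[/and4P[_ _ _ lt_a] _].
  by apply: ltn_add_truncn_mul; rewrite ?PoszD; lra.
Qed.
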